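(* Let $\mathbb K$ be an infinite field, $k\ge2$, $R=\mathbb K[x_1,\ldots,x_k]$, and let $V=V_1\cup\cdots\cup V_m\subset\mathbb P^{k-1}$ be an essential subspace arrangement with $I(V_i)$ generated by $c_i$ linearly independent linear forms. Let $\aleph=1+\sum_{i=1}^m(c_i-1)$; for each $i$ let $\Lambda_i$ be a collection of $\aleph$ distinct linear forms in $I(V_i)$ any $c_i$ of which generate $I(V_i)$; let $\Lambda=(\ell_1,\ldots,\ell_n)$ be the distinct linear forms occurring in $\Lambda_1\cup\cdots\cup\Lambda_m$, and let $a=n-\aleph+1$. Let $\mathcal C_\Lambda=\phi(\mathbb K^k)\subseteq\mathbb K^n$, where $\phi:\mathbb K^k\to\mathbb K^n$, $\phi(v)=(\ell_1(v),\ldots,\ell_n(v))$, and for each $i$ let $\mathcal D_i=\phi(\widehat V_i)$, where $\widehat V_i\subseteq\mathbb K^k$ is the linear subspace which is the common zero locus of $I(V_i)$. Then each $\mathcal D_i$ is a subcode of $\mathcal C_\Lambda$ with $|\mathrm{Supp}(\mathcal D_i)|\le a-1$, and every subcode $\mathcal D\subseteq\mathcal C_\Lambda$ with $|\mathrm{Supp}(\mathcal D)|\le a-1$ is contained in $\mathcal D_{i_0}$ for some $i_0\in\{1,\ldots,m\}$. Thus $\mathcal D_1,\ldots,\mathcal D_m$ are the maximal subcodes of $\mathcal C_\Lambda$ of support size at most $a-1$.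
   Context: A subspace arrangement $V=V_1\cup\cdots\cup V_m$ (components $V_i$ linear subspaces of $\mathbb P^{k-1}$) is essential if $I(V_1)+\cdots+I(V_m)=\langle x_1,\ldots,x_k\rangle$. Since the $\ell_i$ generate $\langle x_1,\ldots,x_k\rangle$, $\phi$ is injective and $\mathcal C_\Lambda$ is an $[n,k]$ linear code (its generating matrix has as columns the coefficient vectors of the $\ell_i$). A subcode is a $\mathbb K$-linear subspace of $\mathcal C_\Lambda$. For a subcode $\mathcal D$, $\mathrm{Supp}(\mathcal D)=\{i:\exists (y_1,\ldots,y_n)\in\mathcal D\text{ with }y_i\ne0\}$. *)

From HB Require Import structures.
From mathcomp Require Import all_boot all_order all_algebra.
Set Implicit Arguments. Unset Strict Implicit. Unset Printing Implicit Defensive.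
Import GRing.Theory.
Local Open Scope ring_scope.

(* Linear forms on K^k are row vectors 'rV[K]_k of coefficients;
   the value of l at v is \sum_j l_j v_j.
   Ideals generated by linear forms are represented by the row space of a
   matrix of generators; a linear form lies in such an ideal iff it lies in
   the span of the generators (degree-1 part). *)

Definition infinite_type (T : eqType) := forall s : seq T, exists x, x \notin s.

(* Essential arrangement: I(V_1)+...+I(V_m) = <x_1,...,x_k>, i.e. the linear
   forms generating the I(V_i) span all linear forms. *)
Definition essential (K : fieldType) (k m : nat) (c : 'I_m -> nat)
  (L : forall i : 'I_m, 'M[K]_(c i, k)) : Prop :=
  row_full (\sum_(i < m) <<L i>>)%MS.

(* Generator matrix of C_Lambda: column t is the coefficient vector of l_t,
   so phi(v) = v *m genmx_of l. *)
Definition code_gen (K : fieldType) (k n : nat) (l : 'I_n -> 'rV[K]_k)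
  : 'M[K]_(k, n) := \matrix_(j < k, t < n) l t 0 j.

(* Support of the subcode spanned by the rows of D : an index t is in the
   support iff some codeword has a nonzero t-th coordinate, iff some
   generating row has a nonzero t-th coordinate. *)
Definition supp (K : fieldType) (p n : nat) (D : 'M[K]_(p, n)) : {set 'I_n} :=
  [set t : 'I_n | [exists r : 'I_p, D r t != 0]].

(* D_i = phi(hat V_i), where hat V_i = {v | l(v) = 0 for all l in I(V_i)}
   = {v | v *m (L i)^T = 0} = row space of kermx (L i)^T. *)
Definition sub_code (K : fieldType) (k n c : nat) (Li : 'M[K]_(c, k))
  (l : 'I_n -> 'rV[K]_k) : 'M[K]_(k, n) :=
  kermx (Li^T) *m code_gen l.

(* A form of Lambda_i lies in I(V_i), so it vanishes on hat V_i: the aleph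
   coordinates of C_Lambda indexed by Lambda_i are zero on D_i, which bounds its
   support by n - aleph.  Conversely, if D has support at most n - aleph, at
   least aleph = 1 + sum (c_i - 1) coordinates vanish on D; each is a form of
   some Lambda_i, so by pigeonhole some Lambda_i contributes c_i of them.  These
   generate I(V_i), so D is annihilated by I(V_i), i.e. D lies in D_i. *)

From HB Require Import structures.
From mathcomp Require Import all_boot all_order all_algebra.
From mathcomp Require Import zify.
Set Implicit Arguments. Unset Strict Implicit. Unset Printing Implicit Defensive.
Import GRing.Theory.
Local Open Scope ring_scope.

Lemma card_bigcup_le (I T : finType) (B : I -> {set T}) :
  (#|\bigcup_(i : I) B i| <= \sum_(i : I) #|B i|)%N.
Proof.
elim/big_rec2: _ => [|i s A _ IH]; first by rewrite cards0.
by apply: leq_trans (leq_card_setU _ _) _; rewrite leq_add2l.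
Qed.

Lemma exists_subset_card (T : finType) (S : {set T}) (c : nat) :
  (c <= #|S|)%N -> exists2 B : {set T}, B \subset S & #|B| = c.
Proof.
elim: c => [|c IH] hc; first by exists set0; rewrite ?sub0set ?cards0.
have [B hBS hB] := IH (ltnW hc).
have /card_gt0P [x] : (0 < #|S :\: B|)%N.
  by rewrite cardsD (setIidPr hBS) hB subn_gt0.
rewrite inE => /andP [hxB hxS].
by exists (x |: B); rewrite ?subUset ?sub1set ?hxS ?hBS // cardsU1 hxB hB.
Qed.

Lemma exists_ltn_sum (I : finType) (a b : I -> nat) :
  (\sum_i a i < \sum_i b i)%N -> [exists i, a i < b i]%N.
Proof.
move=> hab; apply: contraTT hab => /existsPn hba.
by rewrite -leqNgt; apply: leq_sum => i _; rewrite leqNgt hba.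
Qed.

Lemma cover_pigeonhole (I J T : finType) (G : I -> J -> T) (c : I -> nat)
  (Z : {set T}) :
  (forall t, t \in Z -> exists i j, t = G i j) ->
  (\sum_i (c i).-1 < #|Z|)%N ->
  exists i, exists2 B : {set J}, #|B| = c i & forall j, j \in B -> G i j \in Z.
Proof.
move=> hcov hZ; pose A i := [set j | G i j \in Z].
have hZA : Z \subset \bigcup_i [set G i j | j in A i].
  apply/subsetP => t tZ; have [i [j def_t]] := hcov t tZ.
  by apply/bigcupP; exists i => //; rewrite def_t imset_f // inE -def_t.
have hA : (\sum_i (c i).-1 < \sum_i #|A i|)%N.
  apply: (leq_trans hZ); apply: leq_trans (subset_leq_card hZA) _.
  apply: leq_trans (card_bigcup_le _) _.
  by apply: leq_sum => i _; exact: leq_imset_card.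
have /existsP [i /= hi] := exists_ltn_sum hA.
have {hi} hi : (c i <= #|A i|)%N := leq_trans (leqSpred _) hi.
have [B hBA hB] := exists_subset_card hi.
by exists i, B => // j /(subsetP hBA); rewrite inE.
Qed.

Lemma mul_tr_eq0 (K : fieldType) (p a k : nat) (X : 'M[K]_(p, k)) (A : 'M[K]_(a, k)) :
  (X *m A^T == 0) = (A <= kermx X^T)%MS.
Proof. by rewrite -trmx_eq0 trmx_mul trmxK; apply/eqP/sub_kermxP. Qed.

Lemma essential_gt0 (K : fieldType) (k m : nat) (c : 'I_m -> nat)
  (L : forall i : 'I_m, 'M[K]_(c i, k)) :
  essential L -> (0 < k)%N -> (0 < m)%N.
Proof.
case: m c L => // c L; rewrite /essential big_ord0 /row_full mxrank0.
by move=> /eqP <-.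
Qed.

Section CodeCoordinates.

Variables (K : fieldType) (k n : nat) (l : 'I_n -> 'rV[K]_k).

Lemma code_gen_coord (p : nat) (X : 'M[K]_(p, k)) r t :
  (X *m code_gen l) r t = (X *m (l t)^T) r 0.
Proof. by rewrite !mxE; apply: eq_bigr => j _; rewrite !mxE. Qed.

Lemma notin_supp_code (p : nat) (X : 'M[K]_(p, k)) t :
  (t \notin supp (X *m code_gen l)) = (l t <= kermx X^T)%MS.
Proof.
rewrite -mul_tr_eq0 inE negb_exists; apply/forallP/eqP => [h0 | h0 r].
  by apply/matrixP => r j; rewrite [j]ord1 [RHS]mxE -code_gen_coord; exact/eqP/negPn/h0.
by rewrite code_gen_coord h0 mxE eqxx.
Qed.

Lemma notin_supp_sub_code (c : nat) (Li : 'M[K]_(c, k)) t :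
  (l t <= Li)%MS -> t \notin supp (sub_code Li l).
Proof.
move=> hLi; rewrite notin_supp_code; apply: submx_trans hLi _.
by rewrite -mul_tr_eq0 mulmx_ker.
Qed.

Lemma sub_code_max (p c : nat) (Li : 'M[K]_(c, k)) (X : 'M[K]_(p, k)) :
  (Li <= kermx X^T)%MS -> (X *m code_gen l <= sub_code Li l)%MS.
Proof. by rewrite -mul_tr_eq0 => /eqP/sub_kermxP hX; exact: submxMr. Qed.

Lemma card_supp_sub_code (a c : nat) (Li : 'M[K]_(c, k)) (G : 'I_a -> 'I_n) :
  injective G -> (forall j, (l (G j) <= Li)%MS) ->
  (#|supp (sub_code Li l)| <= n - a)%N.
Proof.
move=> Ginj hGL.
have hsub : supp (sub_code Li l) \subset ~: [set G j | j in 'I_a].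
  apply/subsetP => t; apply: contraLR; rewrite inE negbK => /imsetP [j _ ->].
  exact: notin_supp_sub_code.
have := subset_leq_card hsub.
by rewrite [#|~: _|]cardsCs setCK card_imset // !card_ord.
Qed.

End CodeCoordinates.

Theorem proposition2p3 (K : fieldType) (hK : infinite_type K) (k : nat)
  (hk : (2 <= k)%N) (m : nat) (c : 'I_m -> nat)
  (L : forall i : 'I_m, 'M[K]_(c i, k))
  (hc : forall i, (0 < c i < k)%N)
  (hL : forall i, row_free (L i))
  (hess : essential L)
  (aleph : nat) (haleph : aleph = (1 + \sum_(i < m) (c i).-1)%N)
  (Lam : forall i : 'I_m, 'I_aleph -> 'rV[K]_k)
  (hLam_inj : forall i, injective (Lam i))
  (hLam_in : forall i j, (Lam i j <= L i)%MS)
  (hLam_gen : forall i (S : {set 'I_aleph}), #|S| = c i ->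
                (\sum_(j in S) <<Lam i j>> == L i)%MS)
  (n : nat) (l : 'I_n -> 'rV[K]_k) (hl_inj : injective l)
  (hl_sub : forall t, exists i j, l t = Lam i j)
  (hl_sup : forall i j, exists t, l t = Lam i j) :
  (forall i, (sub_code (L i) l <= code_gen l)%MS /\
             (#|supp (sub_code (L i) l)| <= (n - aleph + 1).-1)%N) /\
  (forall (p : nat) (D : 'M[K]_(p, n)),
     (D <= code_gen l)%MS -> (#|supp D| <= (n - aleph + 1).-1)%N ->
     exists i0, (D <= sub_code (L i0) l)%MS).
Proof.
rewrite addn1 /=.
have [G hG] : exists G : 'I_m -> 'I_aleph -> 'I_n, forall i j, l (G i j) = Lam i j.
  apply: (@fin_all_exists _ _ (fun i g => forall j, l (g j) = Lam i j)) => i.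
  exact: (@fin_all_exists _ _ (fun j t => l t = Lam i j)).
have Ginj i : injective (G i).
  by move=> j1 j2 /(congr1 l); rewrite !hG => /hLam_inj.
split=> [i | p _ /submxP [X ->] hsupp].
  split; first exact: submxMl.
  by apply: card_supp_sub_code (Ginj i) _ => j; rewrite hG; exact: hLam_in.
pose Z := ~: supp (X *m code_gen l).
have hn : (aleph <= n)%N.
  have m_gt0 : (0 < m)%N by apply: essential_gt0 hess _; apply: leq_trans hk.
  by have := leq_card _ (Ginj (Ordinal m_gt0)); rewrite !card_ord.
have hZ : (\sum_i (c i).-1 < #|Z|)%N.
  have := cardsC (supp (X *m code_gen l)); rewrite card_ord -/Z.
  move: hsupp hn; rewrite haleph; move: #|supp _| #|Z| (\sum_i _)%N; lia.
have hcov t : t \in Z -> exists i j, t = G i j.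
  by move=> _; have [i [j hij]] := hl_sub t; exists i, j; apply: hl_inj; rewrite hG.
have [i [B hB hBZ]] := cover_pigeonhole hcov hZ.
exists i; apply: sub_code_max.
have /andP [_ hLB] := hLam_gen i B hB.
apply: submx_trans hLB _; apply/sumsmx_subP => j jB.
by rewrite genmxE -hG -notin_supp_code -in_setC; exact: hBZ.
Qed.
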